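(* Let $L>0$, let $f:\mathbb{R}^d\to\mathbb{R}$ be convex and differentiable with $L$-Lipschitz gradient, with global minimum value $f_*$. Let $x_0\in\mathbb{R}^d$, $h_0,\dots,h_{N-1}\in(0,\tfrac32]$, and $x_{i+1}=x_i-\frac{h_i}{L}\nabla f(x_i)$. Then $$\|\nabla f(x_N)\|^2\le\frac{L[f(x_0)-f(x_N)]}{\sum_{i=0}^{N-1}h_i}\quad\text{and}\quad\|\nabla f(x_N)\|^2\le\frac{L[f(x_0)-f_*]}{\tfrac12+\sum_{i=0}^{N-1}h_i}.$$ Moreover both bounds are tight: for any such $L,N,h_i$ and any $\Delta>0$ there exist a convex $f$ with $L$-Lipschitz gradient (on $\mathbb{R}$) and $x_0$ with $f(x_0)-f(x_N)=\Delta$ attaining equality in the first bound, and likewise a convex $f$ with $L$-Lipschitz gradient and $x_0$ with $f(x_0)-f_*=\Delta$ attaining equality in the second bound. *)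

From HB Require Import structures.
From mathcomp Require Import all_boot all_order all_algebra.
From mathcomp Require Import all_classical all_reals all_analysis.
Set Implicit Arguments. Unset Strict Implicit. Unset Printing Implicit Defensive.
Import Order.TTheory GRing.Theory Num.Theory.
Import numFieldNormedType.Exports.
Local Open Scope ring_scope.

Section Defs.
Variables (R : realType) (d : nat).

Definition dotv (u v : 'rV[R]_d) : R := \sum_(i < d) u ord0 i * v ord0 i.

Definition sqnorm (u : 'rV[R]_d) : R := dotv u u.

Definition enorm (u : 'rV[R]_d) : R := Num.sqrt (sqnorm u).

Definition is_gradient (f : 'rV[R]_d -> R) (g : 'rV[R]_d -> 'rV[R]_d) : Prop :=
  forall x, differentiable f x /\ forall v, 'd f x v = dotv (g x) v.

Definition convexf (f : 'rV[R]_d -> R) : Prop :=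
  forall (x y : 'rV[R]_d) (t : R), 0 <= t -> t <= 1 ->
    f ((1 - t) *: x + t *: y) <= (1 - t) * f x + t * f y.

Definition lipschitzL (L : R) (g : 'rV[R]_d -> 'rV[R]_d) : Prop :=
  forall x y, enorm (g x - g y) <= L * enorm (x - y).

Definition is_global_min_value (f : 'rV[R]_d -> R) (fstar : R) : Prop :=
  (exists xs, f xs = fstar) /\ forall x, fstar <= f x.

Fixpoint gd_iter (L : R) (g : 'rV[R]_d -> 'rV[R]_d) (h : nat -> R)
  (x0 : 'rV[R]_d) (n : nat) : 'rV[R]_d :=
  match n with
  | 0 => x0
  | k.+1 => let xk := gd_iter L g h x0 k in xk - (h k / L) *: g xk
  end.

End Defs.

From HB Require Import structures.
From mathcomp Require Import all_boot all_order all_algebra.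
From mathcomp Require Import all_classical all_reals all_analysis.
From mathcomp Require Import lra ring.
Import Order.TTheory GRing.Theory Num.Theory.
Import numFieldNormedType.Exports.
Set Implicit Arguments. Unset Strict Implicit.
Local Open Scope classical_set_scope.
Local Open Scope ring_scope.

(* For a convex f whose gradient g is L-Lipschitz, the interpolation inequality
     f y >= f x + <g x, y - x> + |g y - g x|^2 / (2 L),
   written in both directions between x and a gradient step y = x - (h / L) g x
   with 0 < h <= 3/2, gives |g y| <= |g x| and h |g y|^2 <= L (f x - f y).
   Summing along the iterates yields (sum_i h_i) |g x_N|^2 <= L (f x_0 - f x_N);
   the descent lemma at x_N - g x_N / L adds |g x_N|^2 / 2 <= L (f x_N - f_* ).
   Equality holds in dimension one for a linear function (first bound) and for a
   Huber function whose iterates all stay on one of its linear branches (second). *)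

Section InnerProduct.
Variables (R : realType) (d : nat).
Implicit Types u v w : 'rV[R]_d.

Lemma dotvC u v : dotv u v = dotv v u.
Proof. by apply: eq_bigr => i _; rewrite mulrC. Qed.

Lemma dotvDl u v w : dotv (u + v) w = dotv u w + dotv v w.
Proof. by rewrite /dotv -big_split; apply: eq_bigr => i _; rewrite !mxE mulrDl. Qed.

Lemma dotvZl a u v : dotv (a *: u) v = a * dotv u v.
Proof. by rewrite /dotv mulr_sumr; apply: eq_bigr => i _; rewrite !mxE mulrA. Qed.

Lemma dotvBl u v w : dotv (u - v) w = dotv u w - dotv v w.
Proof. by rewrite dotvDl -scaleN1r dotvZl mulN1r. Qed.

Lemma dotvZr a u v : dotv u (a *: v) = a * dotv u v.
Proof. by rewrite dotvC dotvZl dotvC. Qed.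

Lemma dotvBr u v w : dotv u (v - w) = dotv u v - dotv u w.
Proof. by rewrite dotvC dotvBl !(dotvC u). Qed.

Lemma sqnorm_ge0 u : 0 <= sqnorm u.
Proof. by apply: sumr_ge0 => i _; rewrite -expr2 sqr_ge0. Qed.

Lemma sqnormZ a v : sqnorm (a *: v) = a ^+ 2 * sqnorm v.
Proof. by rewrite /sqnorm dotvZl dotvZr mulrA -expr2. Qed.

Lemma sqnormB u v : sqnorm (u - v) = sqnorm u - 2 * dotv u v + sqnorm v.
Proof. by rewrite /sqnorm dotvBl !dotvBr (dotvC v u); ring. Qed.

Lemma dotv_le_sqnorm u v c :
  0 < c -> sqnorm u <= c ^+ 2 * sqnorm v -> dotv u v <= c * sqnorm v.
Proof.
move=> c0 uv; have := sqnorm_ge0 (u - c *: v).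
rewrite sqnormB dotvZr sqnormZ => sq_ge0.
have : 0 <= (2 * c) * (c * sqnorm v - dotv u v) by lra.
by rewrite pmulr_rge0 ?subr_ge0 ?mulr_gt0.
Qed.

Lemma lipschitzL_sqnorm L (g : 'rV[R]_d -> 'rV[R]_d) : 0 <= L -> lipschitzL L g ->
  forall x y, sqnorm (g x - g y) <= L ^+ 2 * sqnorm (x - y).
Proof.
move=> L0 lip x y; have := lip x y; rewrite /enorm => le_norm.
rewrite -[sqnorm (g x - g y)]sqr_sqrtr ?sqnorm_ge0 //.
rewrite -[sqnorm (x - y)]sqr_sqrtr ?sqnorm_ge0 // -exprMn.
by rewrite ler_pXn2r // ?nnegrE ?sqrtr_ge0 // mulr_ge0 // sqrtr_ge0.
Qed.

End InnerProduct.

Section Gradient.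
Variables (R : realType) (d : nat) (f : 'rV[R]_d -> R) (g : 'rV[R]_d -> 'rV[R]_d).
Hypothesis fg : is_gradient f g.

Lemma is_derive_line (x v : 'rV[R]_d) (t : R) :
  is_derive t 1 (fun s : R => f (s *: v + x)) (dotv (g (t *: v + x)) v).
Proof.
have quotE : (fun h : R => h^-1 *: (((fun s => f (s *: v + x)) \o shift t) (h *: 1)
                                    - f (t *: v + x)))
   = (fun h => h^-1 *: ((f \o shift (t *: v + x)) (h *: v) - f (t *: v + x))).
  apply/funext => h /=; congr (_ *: (f _ - _)).
  by rewrite /shift /= [h%:A]mulr1 scalerDl addrA.
have [df dfv] := fg (t *: v + x).
have dline : derivable (fun s : R => f (s *: v + x)) t 1.
  by rewrite /derivable quotE; exact: diff_derivable.
by apply: DeriveDef => //; rewrite /derive quotE -/(derive f _ v) deriveE.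
Qed.

Hypothesis fc : convexf f.

Lemma convex_first_order x y : f x + dotv (g x) (y - x) <= f y.
Proof.
(* By convexity each right difference quotient of [th] at 0 is at most [th 1 - th 0]. *)
set th := fun s : R => f (s *: (y - x) + x).
have th0 : th 0 = f x by rewrite /th scale0r add0r.
have [dth] := is_derive_line x (y - x) 0; rewrite scale0r add0r => <-.
set q := fun h : R => h^-1 *: ((th \o shift 0) (h *: 1) - th 0).
have q_right : q @ 0^'+ --> 'D_1 th 0.
  apply: cvg_trans dth; apply: cvg_app => P /=.
  rewrite !near_simpl /= !near_withinE => HP; apply: filterS HP => z Pz z0.
  by apply: Pz; rewrite gt_eqF.
rewrite -lerBrDl; apply: (cvgr_to_le q_right).
near=> h.
have h0 : 0 < h by near: h; exact: nbhs_right_gt.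
have h1 : h <= 1 by near: h; apply: nbhs_right_le; exact: ltr01.
have := fc x y (ltW h0) h1.
rewrite /q /= th0 /th /= addr0 [h%:A]mulr1.
have <- : h *: (y - x) + x = (1 - h) *: x + h *: y.
  by rewrite scalerBr scalerBl scale1r addrAC [RHS]addrC addrA.
rewrite /GRing.scale /= => convex_h.
rewrite -(ler_pM2l h0) mulrA divff ?gt_eqF // mul1r; lra.
Unshelve. all: by end_near.
Qed.

End Gradient.

Section LipschitzGradient.
Variables (R : realType) (d : nat) (f : 'rV[R]_d -> R) (g : 'rV[R]_d -> 'rV[R]_d) (L : R).
Hypotheses (fg : is_gradient f g) (L0 : 0 < L) (lip : lipschitzL L g).

Lemma descent_ineq x y : f y <= f x + dotv (g x) (y - x) + L / 2 * sqnorm (y - x).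
Proof.
(* [psi] is nonincreasing on [0, 1]: its derivative at [t] is
   [<g (x + t v) - g x, v> - L t |v|^2 <= 0]. *)
set v := y - x; set a := dotv (g x) v; set k := L / 2 * sqnorm v.
set P := (a \*: idfun + k \*: (idfun * idfun) : R -> R).
set psi := (fun s : R => f (s *: v + x)) - P.
have dpsi (t : R) : is_derive t 1 psi
    (dotv (g (t *: v + x)) v - (a *: 1 + k *: (t *: 1 + t *: 1))).
  by apply: is_deriveB; exact: is_derive_line.
have psi'_le0 (t : R) : t \in `]0, 1[ -> derive1 psi t <= 0.
  rewrite in_itv /= => /andP [t0 _].
  have Lt0 : 0 < L * t by rewrite mulr_gt0.
  have := dotv_le_sqnorm (u := g (t *: v + x) - g x) (v := v) Lt0.
  rewrite dotvBl derive1E derive_val /GRing.scale /= !mulr1 /a /k.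
  have := lipschitzL_sqnorm (ltW L0) lip (t *: v + x) x.
  rewrite addrK sqnormZ mulrA -exprMn => lip_t /(_ lip_t); lra.
have psi_derivable (t : R) : derivable psi t 1 by case: (dpsi t).
have psi_cont : {within `[0, 1], continuous psi}.
  exact: derivable_within_continuous.
have := ler0_derive1_le_cc (fun t _ => psi_derivable t) psi'_le0 psi_cont.
move=> /(_ 1 0); rewrite !in_itv /= !lexx ler01 => /(_ isT isT isT).
change (f (1 *: v + x) - (a * 1 + k * (1 * 1))
        <= f (0 *: v + x) - (a * 0 + k * (0 * 0)) -> f y <= f x + a + k).
rewrite scale1r scale0r add0r /v subrK; lra.
Qed.

Lemma sqnorm_grad_le_gap fstar x :
  (forall y, fstar <= f y) -> sqnorm (g x) / 2 <= L * (f x - fstar).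
Proof.
move=> fmin; set y := x - L^-1 *: g x.
have := descent_ineq x y; have := fmin y.
have -> : y - x = (- L^-1) *: g x by rewrite /y addrAC subrr add0r scaleNr.
rewrite dotvZr sqnormZ -/(sqnorm (g x)).
set G := sqnorm (g x) => fmin_y descent_y.
have gap : L^-1 * G / 2 <= f x - fstar.
  have : L / 2 * ((- L^-1) ^+ 2 * G) = L^-1 * G / 2 by field; rewrite gt_eqF.
  lra.
have -> : G / 2 = L * (L^-1 * G / 2) by field; rewrite gt_eqF.
by rewrite ler_pM2l.
Qed.

Hypothesis fc : convexf f.

Lemma interpolation_ineq x y :
  f x + dotv (g x) (y - x) + sqnorm (g y - g x) / (2 * L) <= f y.
Proof.
set u := g y - g x; set w := y - L^-1 *: u.
have := convex_first_order fg fc x w; have := descent_ineq y w.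
have -> : w - x = (y - x) - L^-1 *: u by rewrite /w addrAC.
have -> : w - y = (- L^-1) *: u by rewrite /w addrAC subrr add0r scaleNr.
rewrite !dotvBr !dotvZr sqnormZ.
have uu : sqnorm u = dotv (g y) u - dotv (g x) u by rewrite {1}/u /sqnorm dotvBl.
have -> : L / 2 * ((- L^-1) ^+ 2 * sqnorm u) = L^-1 * sqnorm u / 2.
  by field; rewrite gt_eqF.
have -> : sqnorm u / (2 * L) = L^-1 * sqnorm u / 2 by field; rewrite gt_eqF.
rewrite uu; lra.
Qed.

Lemma gd_step_le x h : 0 < h -> h <= 3 / 2 ->
  h * sqnorm (g (x - (h / L) *: g x)) <= L * (f x - f (x - (h / L) *: g x)) /\
  sqnorm (g (x - (h / L) *: g x)) <= sqnorm (g x).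
Proof.
move=> h0 h32; set k := h / L; set y := x - k *: g x.
have := interpolation_ineq y x; have := interpolation_ineq x y.
have -> : x - y = k *: g x by rewrite /y opprB addrC subrK.
have -> : y - x = (- k) *: g x by rewrite /y addrAC subrr add0r scaleNr.
rewrite !dotvZr !sqnormB (dotvC (g x)) -/(sqnorm (g x)).
set A := sqnorm (g x); set B := sqnorm (g y); set C := dotv (g y) (g x).
set m := (2 * L)^-1 => c2 c1.
have k0 : 0 < k by rewrite divr_gt0.
have m0 : 0 < m by rewrite invr_gt0 mulr_gt0.
have km : k <= 3 * m by rewrite /k /m invfM mulrA ler_pM2r ?invr_gt0.
have U0 : 0 <= A - 2 * C + B.
  by have := sqnorm_ge0 (g x - g y); rewrite sqnormB (dotvC (g x)).
have hint1 : 0 <= (3 * m - k) * (A - 2 * C + B) by rewrite mulr_ge0 ?subr_ge0.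
have hint2 : 0 <= m * (A - 2 * C + B) by rewrite mulr_ge0 // ltW.
have decrease : k * B <= f x - f y by lra.
split.
  by rewrite -[h](mulfVK (lt0r_neq0 L0)) -/k mulrAC [L * _]mulrC ler_pM2r.
have : 0 <= k * (A - B) by lra.
by rewrite pmulr_rge0 // subr_ge0.
Qed.

Lemma gd_iter_sum_le x0 N (h : nat -> R) :
  (forall i, (i < N)%N -> 0 < h i /\ h i <= 3 / 2) ->
  (\sum_(i < N) h i) * sqnorm (g (gd_iter L g h x0 N))
    <= L * (f x0 - f (gd_iter L g h x0 N)).
Proof.
elim: N => [|n IH] hN; first by rewrite big_ord0 mul0r subrr mulr0.
have {IH} := IH (fun i lt_in => hN i (leqW lt_in)).
have [h0 h32] := hN n (ltnSn n).
have := gd_step_le (gd_iter L g h x0 n) h0 h32.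
rewrite big_ord_recr /= -/(gd_iter L g h x0 n.+1).
set S := \sum_(i < n) h i => -[step_decr step_mono] sum_n.
have S0 : 0 <= S by apply: sumr_ge0 => i _; have [/ltW] := hN i (leqW (ltn_ord i)).
have := ler_wpM2l S0 step_mono; lra.
Qed.

End LipschitzGradient.

Section Lift.
Variable R : realType.

Definition entry11 (x : 'rV[R]_1) : R := x ord0 ord0.

Fact entry11_is_linear : linear entry11.
Proof. by move=> a u v; rewrite /entry11 !mxE. Qed.

HB.instance Definition _ :=
  GRing.isLinear.Build R 'rV[R]_1 R _ entry11 entry11_is_linear.

Definition lift1 (F : R -> R) (x : 'rV[R]_1) : R := F (entry11 x).

Definition lift1_grad (q : R -> R) (x : 'rV[R]_1) : 'rV[R]_1 :=
  const_mx (q (entry11 x)).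

Lemma sqnorm_lift1_grad q x : sqnorm (lift1_grad q x) = q (entry11 x) ^+ 2.
Proof. by rewrite /sqnorm /dotv big_ord1 mxE expr2. Qed.

Lemma enorm_entry11 (u : 'rV[R]_1) : enorm u = `|entry11 u|.
Proof. by rewrite /enorm /sqnorm /dotv big_ord1 -expr2 sqrtr_sqr. Qed.

Lemma gd_iter_lift1S L q (h : nat -> R) x0 n :
  entry11 (gd_iter L (lift1_grad q) h x0 n.+1) =
  entry11 (gd_iter L (lift1_grad q) h x0 n)
  - h n / L * q (entry11 (gd_iter L (lift1_grad q) h x0 n)).
Proof. by rewrite /entry11 /= !mxE. Qed.

Lemma gd_iter_lift1_affine L q c (h : nat -> R) x0 n :
  (forall k, (k < n)%N -> q (entry11 x0 - c / L * \sum_(i < k) h i) = c) ->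
  entry11 (gd_iter L (lift1_grad q) h x0 n) = entry11 x0 - c / L * \sum_(i < n) h i.
Proof.
elim: n => [|n IH] qc; first by rewrite big_ord0 mulr0 subr0.
rewrite gd_iter_lift1S IH => [|k lt_kn]; last exact/qc/leqW.
by rewrite qc // big_ord_recr /=; ring.
Qed.

Variables (F q : R -> R) (L : R).
Hypotheses (L0 : 0 < L) (F_sub : forall x y, F x + q x * (y - x) <= F y).
Hypothesis q_lip : forall x y, `|q y - q x| <= L * `|y - x|.

Lemma subgradient_remainder (t s : R) : `|F (s + t) - F t - q t * s| <= L * s ^+ 2.
Proof.
have lower := F_sub t (s + t); have upper := F_sub (s + t) t.
rewrite addrK in lower; rewrite opprD addrCA subrr addr0 in upper.
have slope : (q (s + t) - q t) * s <= L * s ^+ 2.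
  apply: le_trans (ler_norm _) _; rewrite normrM.
  have := q_lip t (s + t); rewrite addrK => /(ler_wpM2r (normr_ge0 s)).
  by rewrite -mulrA -expr2 real_normK ?num_real.
rewrite ger0_norm; lra.
Qed.

Lemma is_derive_subgradient (t : R) : is_derive t 1 F (q t).
Proof.
set Q := fun h : R => h^-1 *: ((F \o shift t) (h *: 1) - F t).
have Q_cvg : Q @ 0^' --> q t.
  apply/cvgrPdist_le => e e0; near=> h.
  have h0 : h != 0 by near: h; exact: nbhs_dnbhs_neq.
  have he : `|h| <= e / L.
    near: h; rewrite near_withinE.
    by apply: filterS (nbhs0_le (divr_gt0 e0 L0)) => y Hy _.
  rewrite /Q /= [h *: 1]mulr1 /GRing.scale /=.
  have -> : q t - h^-1 * (F (h + t) - F t) = - h^-1 * (F (h + t) - F t - q t * h).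
    by field.
  rewrite normrM normrN normrV ?unitfE // ler_pdivrMl ?normr_gt0 //.
  apply: le_trans (subgradient_remainder t h) _.
  rewrite ler_pdivlMr // in he.
  rewrite -real_normK ?num_real //; have := normr_ge0 h; nra.
have dF : derivable F t 1 by apply/cvg_ex; exists (q t).
by apply: DeriveDef => //; exact: cvg_lim.
Unshelve. all: by end_near.
Qed.

Lemma lift1_convex : convexf (lift1 F).
Proof.
move=> x y t t0 t1; rewrite /lift1 /entry11 !mxE /GRing.scale /=.
set z := (1 - t) * x ord0 ord0 + t * y ord0 ord0.
have t1' : 0 <= 1 - t by rewrite subr_ge0.
have := ler_wpM2l t1' (F_sub z (x ord0 ord0)).
have := ler_wpM2l t0 (F_sub z (y ord0 ord0)).
rewrite /z; lra.
Qed.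

Lemma lift1_is_gradient : is_gradient (lift1 F) (lift1_grad q).
Proof.
move=> x; have [dF F'] := is_derive_subgradient (entry11 x).
have entry11_cont : continuous entry11 by exact: coord_continuous.
have d_entry11 := linear_differentiable x entry11_cont.
have dFx : differentiable F (entry11 x) by exact/derivable1_diffP.
have -> : lift1 F = F \o entry11 by [].
split; first exact: differentiable_comp d_entry11 dFx.
move=> v; rewrite diff_comp // diff1E // diff_lin //= /dotv big_ord1 mxE.
by rewrite derive1E F' mulrC.
Qed.

Lemma lift1_lipschitz : lipschitzL L (lift1_grad q).
Proof. by move=> x y; rewrite !enorm_entry11 /entry11 !mxE; exact: q_lip. Qed.

End Lift.

Section Clamp.
Variables (R : realType) (c : R).
Hypothesis c0 : 0 < c.

Definition clamp (u : R) : R := if u <= - c then - c else if c <= u then c else u.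

Lemma clamp_range u : - c <= clamp u <= c.
Proof.
have := c0; rewrite /clamp; case: (lerP u (- c)) => ?; case: (lerP c u) => ?.
all: by move=> ?; apply/andP; split; lra.
Qed.

Lemma clamp_ge u : c <= u -> clamp u = c.
Proof. by move=> cu; rewrite /clamp cu; case: (lerP u (- c)) => //; have := c0; lra. Qed.

Lemma clamp0 : clamp 0 = 0.
Proof. by rewrite /clamp; case: (lerP 0 (- c)) => ?; case: (lerP c 0) => ? //; have := c0; lra. Qed.

Lemma clamp_mono u v : u <= v -> 0 <= clamp v - clamp u <= v - u.
Proof.
move=> uv; have := c0; rewrite /clamp.
by case: (lerP v (- c)) => ?; case: (lerP c v) => ?; case: (lerP u (- c)) => ?;
  case: (lerP c u) => ? ?; apply/andP; split; lra.
Qed.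

Lemma clamp_lipschitz u v : `|clamp v - clamp u| <= `|v - u|.
Proof.
wlog uv : u v / u <= v.
  move=> clamp_lip; case/orP: (le_total u v) => [|vu]; first exact: clamp_lip.
  by rewrite distrC (distrC v); exact: clamp_lip.
by have /andP [? ?] := clamp_mono uv; rewrite !ger0_norm // subr_ge0.
Qed.

Lemma clamp_maximizes u p :
  - c <= p <= c -> p * u - p ^+ 2 / 2 <= clamp u * u - clamp u ^+ 2 / 2.
Proof.
move=> /andP [p1 p2]; rewrite /clamp.
case: (lerP u (- c)) => u1.
  have : 0 <= (p + c) * (p - c - 2 * u) by apply: mulr_ge0; lra.
  nra.
case: (lerP c u) => u2.
  have : 0 <= (c - p) * (2 * u - c - p) by apply: mulr_ge0; lra.
  nra.
by have := sqr_ge0 (u - p); nra.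
Qed.

End Clamp.

Section Huber.
Variables (R : realType) (c L : R).
Hypotheses (c0 : 0 < c) (L0 : 0 < L).

(* [huber] is [L t^2 / 2] on [|L t| <= c] and affine with slope [+-c] outside;
   [huber_grad] is its derivative. *)
Definition huber_grad (t : R) : R := clamp c (L * t).

Definition huber (t : R) : R := huber_grad t * t - huber_grad t ^+ 2 / (2 * L).

Lemma huber_subgradient x y : huber x + huber_grad x * (y - x) <= huber y.
Proof.
rewrite -(ler_pM2l L0).
have -> : L * (huber x + huber_grad x * (y - x))
          = huber_grad x * (L * y) - huber_grad x ^+ 2 / 2.
  by rewrite /huber; field; rewrite gt_eqF.
have -> : L * huber y = huber_grad y * (L * y) - huber_grad y ^+ 2 / 2.
  by rewrite /huber; field; rewrite gt_eqF.
exact/clamp_maximizes/clamp_range.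
Qed.

Lemma huber_grad_lipschitz x y : `|huber_grad y - huber_grad x| <= L * `|y - x|.
Proof.
apply: le_trans (clamp_lipschitz c0 (L * x) (L * y)) _.
by rewrite -mulrBr normrM gtr0_norm.
Qed.

Lemma huber_grad_ge t : c <= L * t -> huber_grad t = c.
Proof. exact: clamp_ge. Qed.

Lemma huber0 : huber 0 = 0.
Proof. by rewrite /huber /huber_grad !mulr0 clamp0 // expr0n /= mul0r subr0. Qed.

Lemma huber_ge0 y : 0 <= huber y.
Proof.
have := huber_subgradient 0 y.
by rewrite huber0 /huber_grad mulr0 clamp0 // add0r mul0r.
Qed.

End Huber.

Lemma sumr_ord_le (R : numDomainType) (h : nat -> R) n N :
  (forall i, (i < N)%N -> 0 <= h i) -> (n <= N)%N ->
  \sum_(i < n) h i <= \sum_(i < N) h i.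
Proof.
move=> h0 nN; rewrite -!(big_mkord xpredT) (big_cat_nat (leq0n n) nN) /= lerDl.
by rewrite big_nat_cond; apply: sumr_ge0 => i /andP [/andP [_ iN] _]; exact: h0.
Qed.

Lemma sumr_ord_gt0 (R : numDomainType) (h : nat -> R) N :
  (0 < N)%N -> (forall i, (i < N)%N -> 0 < h i) -> 0 < \sum_(i < N) h i.
Proof.
case: N => // n _ h0; rewrite big_ord_recl; apply: ltr_pwDl; first exact: h0.
by apply: sumr_ge0 => i _; exact/ltW/h0.
Qed.

Section Tightness.
Variables (R : realType) (L : R) (N : nat) (h : nat -> R) (Delta : R).
Hypotheses (L0 : 0 < L) (h0 : forall i, (i < N)%N -> 0 < h i) (Delta0 : 0 < Delta).

Let S := \sum_(i < N) h i.

Lemma gd_linear_tight : (0 < N)%N ->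
  exists (f : 'rV[R]_1 -> R) (g : 'rV[R]_1 -> 'rV[R]_1) (x0 : 'rV[R]_1),
    [/\ convexf f, is_gradient f g, lipschitzL L g,
        f x0 - f (gd_iter L g h x0 N) = Delta &
        sqnorm (g (gd_iter L g h x0 N))
          = L * (f x0 - f (gd_iter L g h x0 N)) / \sum_(i < N) h i].
Proof.
move=> N0; have S0 : 0 < S by exact: sumr_ord_gt0.
set c := Num.sqrt (L * Delta / S).
have c2 : c ^+ 2 = L * Delta / S by rewrite sqr_sqrtr // ltW // divr_gt0 ?mulr_gt0.
set F := fun t : R => c * t; set q := fun _ : R => c.
have F_sub x y : F x + q x * (y - x) <= F y by rewrite /F /q; lra.
have q_lip x y : `|q y - q x| <= L * `|y - x|.
  by rewrite /q subrr normr0 mulr_ge0 // ltW.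
exists (lift1 F), (lift1_grad q), 0.
have XN : entry11 (gd_iter L (lift1_grad q) h 0 N) = - (c / L) * S.
  by rewrite (@gd_iter_lift1_affine _ _ _ c) // /entry11 mxE sub0r mulNr.
have gap : lift1 F 0 - lift1 F (gd_iter L (lift1_grad q) h 0 N) = Delta.
  rewrite /lift1 XN /F /entry11 mxE mulr0 sub0r.
  have -> : - (c * (- (c / L) * S)) = c ^+ 2 * S / L by field; rewrite gt_eqF.
  by rewrite c2; field; rewrite !gt_eqF.
split=> //; [exact: lift1_convex F_sub | exact: lift1_is_gradient L0 F_sub q_lip |
              exact: lift1_lipschitz q_lip |].
by rewrite gap sqnorm_lift1_grad c2.
Qed.

Lemma gd_huber_tight :
  exists (f : 'rV[R]_1 -> R) (g : 'rV[R]_1 -> 'rV[R]_1) (fstar : R) (x0 : 'rV[R]_1),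
    [/\ convexf f, is_gradient f g, lipschitzL L g,
        is_global_min_value f fstar /\ f x0 - fstar = Delta &
        sqnorm (g (gd_iter L g h x0 N)) = L * (f x0 - fstar) / (1 / 2 + \sum_(i < N) h i)].
Proof.
have S0 : 0 <= S by apply: sumr_ge0 => i _; exact/ltW/h0.
have S12 : 0 < 1 / 2 + S by lra.
set c := Num.sqrt (L * Delta / (1 / 2 + S)).
have c2 : c ^+ 2 = L * Delta / (1 / 2 + S).
  by rewrite sqr_sqrtr // ltW // divr_gt0 ?mulr_gt0.
have c0 : 0 < c by rewrite sqrtr_gt0 divr_gt0 ?mulr_gt0.
(* Starting at [(1 + S) c / L], every iterate stays where [huber] has slope [c],
   and the last one lands on the kink [c / L]. *)
set x0 : 'rV[R]_1 := const_mx (c * (1 + S) / L).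
have x0E : entry11 x0 = c * (1 + S) / L by rewrite /entry11 mxE.
have in_slope t : t <= S -> huber_grad c L (entry11 x0 - c / L * t) = c.
  move=> tS; apply: (huber_grad_ge c0).
  have -> : L * (entry11 x0 - c / L * t) = c + c * (S - t).
    by rewrite x0E; field; rewrite gt_eqF.
  by rewrite lerDl mulr_ge0 ?subr_ge0 // ltW.
have XN : entry11 (gd_iter L (lift1_grad (huber_grad c L)) h x0 N) = c / L.
  rewrite (@gd_iter_lift1_affine _ _ _ c) -/S.
    by rewrite x0E; field; rewrite gt_eqF.
  by move=> k /ltnW kN; apply/in_slope/sumr_ord_le => // i /h0 /ltW.
have gap : lift1 (huber c L) x0 - 0 = Delta.
  rewrite subr0 /lift1 /huber (huber_grad_ge c0) x0E; last first.
    by rewrite mulrCA divff ?gt_eqF // mulr1 -{1}[c]mulr1 ler_pM2l // lerDl.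
  have -> : c * (c * (1 + S) / L) - c ^+ 2 / (2 * L) = c ^+ 2 * (1 / 2 + S) / L.
    by field; rewrite gt_eqF.
  by rewrite c2; field; rewrite !gt_eqF //; lra.
exists (lift1 (huber c L)), (lift1_grad (huber_grad c L)), 0, x0.
have hsub := huber_subgradient c0 L0; have hlip := huber_grad_lipschitz c0 L0.
split; [exact: lift1_convex hsub | exact: lift1_is_gradient L0 hsub hlip |
        exact: lift1_lipschitz hlip | |].
  split=> //; split; first by exists 0; rewrite /lift1 /entry11 mxE huber0.
  by move=> x; exact: huber_ge0.
rewrite gap sqnorm_lift1_grad XN (huber_grad_ge c0); last by rewrite mulrC mulfVK ?gt_eqF.
by rewrite c2.
Qed.

End Tightness.
Theorem proposition4p4 (R : realType) :
  (* upper bounds *)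
  (forall (d : nat) (L : R) (f : 'rV[R]_d -> R) (g : 'rV[R]_d -> 'rV[R]_d)
          (fstar : R) (x0 : 'rV[R]_d) (N : nat) (h : nat -> R),
      0 < L -> convexf f -> is_gradient f g -> lipschitzL L g ->
      is_global_min_value f fstar ->
      (forall i, (i < N)%N -> 0 < h i /\ h i <= 3 / 2) ->
      ((0 < N)%N ->
         sqnorm (g (gd_iter L g h x0 N))
           <= L * (f x0 - f (gd_iter L g h x0 N)) / \sum_(i < N) h i)
      /\
      sqnorm (g (gd_iter L g h x0 N))
        <= L * (f x0 - fstar) / (1 / 2 + \sum_(i < N) h i))
  /\
  (* tightness of both bounds, attained by functions on R (d = 1) *)
  (forall (L : R) (N : nat) (h : nat -> R) (Delta : R),
      0 < L -> (forall i, (i < N)%N -> 0 < h i /\ h i <= 3 / 2) -> 0 < Delta ->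
      ((0 < N)%N ->
         exists (f : 'rV[R]_1 -> R) (g : 'rV[R]_1 -> 'rV[R]_1) (x0 : 'rV[R]_1),
           [/\ convexf f, is_gradient f g, lipschitzL L g,
               f x0 - f (gd_iter L g h x0 N) = Delta &
               sqnorm (g (gd_iter L g h x0 N))
                 = L * (f x0 - f (gd_iter L g h x0 N)) / \sum_(i < N) h i])
      /\
      (exists (f : 'rV[R]_1 -> R) (g : 'rV[R]_1 -> 'rV[R]_1) (fstar : R)
              (x0 : 'rV[R]_1),
         [/\ convexf f, is_gradient f g, lipschitzL L g,
             is_global_min_value f fstar /\ f x0 - fstar = Delta &
             sqnorm (g (gd_iter L g h x0 N))
               = L * (f x0 - fstar) / (1 / 2 + \sum_(i < N) h i)])).
Proof.
split.
  move=> d L f g fstar x0 N h L0 fc fg lip [_ fmin] hN.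
  have h0 i (lt_iN : (i < N)%N) : 0 < h i := (hN i lt_iN).1.
  have sum_le := gd_iter_sum_le fg L0 lip fc x0 hN.
  split=> [N0|]; first by rewrite ler_pdivlMr ?sumr_ord_gt0 // mulrC.
  have gap := sqnorm_grad_le_gap fg L0 lip (gd_iter L g h x0 N) fmin.
  have S0 : 0 <= \sum_(i < N) h i by apply: sumr_ge0 => i _; exact/ltW/h0.
  rewrite ler_pdivlMr; lra.
move=> L N h Delta L0 hN Delta0.
have h0 i (lt_iN : (i < N)%N) : 0 < h i := (hN i lt_iN).1.
by split; [exact: gd_linear_tight | exact: gd_huber_tight].
Qed.
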